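(* Let $(\mathcal{K},[\cdot,\cdot])$ be a Krein space with fundamental symmetry $J$ and let $\{k_n\}_{n\in\mathfrak{N}}$ ($\mathfrak{N}$ a countable index set) be a tight frame for the Krein space $\mathcal{K}$ with frame bounds $A=B=1$, i.e. $\sum_{n\in\mathfrak{N}}|[k_n,k]|^2=\|k\|_J^2$ for all $k\in\mathcal{K}$. Assume that $|[k_n,k_n]|=1$ for all $n\in\mathfrak{N}$. Then $\{k_n\}_{n\in\mathfrak{N}}$ is a $J$-orthonormal basis for $\mathcal{K}$.
   Context: A Krein space $(\mathcal{K},[\cdot,\cdot])$ has a fundamental decomposition $\mathcal{K}=\mathcal{K}_+\oplus\mathcal{K}_-$ and fundamental symmetry $J(k^++k^-)=k^+-k^-$, such that $[h,k]_J:=[h,Jk]$ is a positive definite inner product making $\mathcal{K}$ a Hilbert space; $\|k\|_J:=\sqrt{[k,k]_J}$. A $J$-orthonormal basis is a complete family $\{e_n\}_{n\in\mathfrak{N}}\subset\mathcal{K}$ (its closed linear span is $\mathcal{K}$) such that $[e_n,e_m]=0$ for $n\neq m$ and $|[e_n,e_n]|=1$ for all $n$. *)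

From HB Require Import structures.
From mathcomp Require Import all_boot all_order all_algebra.
From mathcomp Require Import all_classical all_reals.
From mathcomp Require Import ereal esum.
From mathcomp.real_closed Require Import complex.

Set Implicit Arguments.
Unset Strict Implicit.
Unset Printing Implicit Defensive.

Import Order.TTheory GRing.Theory Num.Theory.
Local Open Scope ring_scope.
Local Open Scope complex_scope.

(* Complex Krein spaces, presented via a fundamental symmetry J:
   V is a complex vector space, kf = [.,.] is the indefinite inner product,
   J is the fundamental symmetry, and [h,k]_J := [h, J k]. *)
Section Krein.
Variables (R : realType) (V : lmodType R[i]).
Variables (kf : V -> V -> R[i]) (J : V -> V).

Definition Jip (h k : V) : R[i] := kf h (J k).

(* ||k||_J := sqrt [k,k]_J  ([k,k]_J is real and nonnegative) *)
Definition normJ (k : V) : R := Num.sqrt (complex.Re (Jip k k)).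

Definition sqabs (z : R[i]) : R := Normc.normc z ^+ 2.

Definition is_krein_space : Prop :=
  (forall (a : R[i]) (x y z : V), kf (a *: x + y) z = a * kf x z + kf y z) /\
  (forall x y : V, kf y x = (kf x y)^*) /\
  (forall (a : R[i]) (x y : V), J (a *: x + y) = a *: J x + J y) /\
  (forall x : V, J (J x) = x) /\
  (forall x y : V, kf (J x) y = kf x (J y)) /\
  (forall x : V, x != 0 -> 0 < Jip x x) /\
  (forall u : nat -> V,
     (forall eps : R, 0 < eps -> exists N : nat, forall m n : nat,
        (N <= m)%N -> (N <= n)%N -> normJ (u m - u n) < eps) ->
     exists x : V, forall eps : R, 0 < eps -> exists N : nat, forall n : nat,
        (N <= n)%N -> normJ (u n - x) < eps).

Definition parseval_frame (I : countType) (k : I -> V) : Prop :=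
  forall x : V,
    (\esum_(n in [set: I]) (sqabs (kf (k n) x))%:E)%E = ((normJ x) ^+ 2)%:E.

(* the closed linear span of the family e is the whole space: every vector
   is a J-norm limit of finite linear combinations of the e n *)
Definition complete_family (I : Type) (e : I -> V) : Prop :=
  forall (x : V) (eps : R), 0 < eps ->
    exists (s : seq I) (c : I -> R[i]),
      normJ (x - \sum_(n <- s) c n *: e n) < eps.

Definition J_orthonormal_basis (I : Type) (e : I -> V) : Prop :=
  complete_family e /\
  (forall n m : I, n <> m -> kf (e n) (e m) = 0) /\
  (forall n : I, sqabs (kf (e n) (e n)) = 1).

End Krein.

From HB Require Import structures.
From mathcomp Require Import all_boot all_order all_algebra.
From mathcomp Require Import all_classical all_reals.
From mathcomp Require Import ereal esum.
From mathcomp.real_closed Require Import complex.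
From mathcomp Require Import lra.

(* Testing the Parseval identity on k_m and on J k_m and keeping only the
   term n = m gives 1 <= ||k_m||_J^2 and ||k_m||_J^4 <= ||k_m||_J^2; hence
   ||k_m||_J = 1 and every other term of both Parseval sums vanishes, i.e.
   [k_n, k_m] = 0 and [k_n, k_m]_J = 0 for n <> m.  So {k_n} is an
   orthonormal family of the Hilbert space (K, [.,.]_J), and Bessel's identity
   ||x - sum_{n in s} [x, k_n]_J k_n||_J^2 = ||x||_J^2 - sum_{n in s} |[x, k_n]_J|^2
   together with the Parseval identity for J x makes the left side as small
   as we like. *)

Set Implicit Arguments.
Unset Strict Implicit.
Unset Printing Implicit Defensive.

Import Order.TTheory GRing.Theory Num.Theory.
Local Open Scope ring_scope.
Local Open Scope complex_scope.

Section FiniteSumsOfEsum.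
Variables (R : realType) (I : countType) (f : I -> R) (S : R).
Hypothesis esum_f : (\esum_(n in [set: I]) (f n)%:E = S%:E)%E.

Lemma sum_le_esum_EFin (s : seq I) : uniq s -> \sum_(n <- s) f n <= S.
Proof.
move=> s_uniq; rewrite -lee_fin -sumEFin -esum_f; apply: esum_ge.
exists [set` s]%classic; first by split; [exact: finite_seq|].
by rewrite fsbig_seq.
Qed.

Lemma esum_EFin_approx (eps : R) : 0 < eps ->
  exists2 s : seq I, uniq s & S - eps < \sum_(n <- s) f n.
Proof.
move=> eps_gt0.
have : ((S - eps)%:E < \esum_(n in [set: I]) (f n)%:E)%E.
  by rewrite esum_f lte_fin gtrDl oppr_lt0.
move/ereal_sup_gt => [_ [A [finA _] <-]].
rewrite fsbig_finite // sumEFin lte_fin => lt_sum.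
by exists (finmap.enum_fset (fset_set A)) => //; exact: finmap.fset_uniq.
Qed.

End FiniteSumsOfEsum.

Section SquaredModulus.
Variable R : realType.
Implicit Type z : R[i].

Lemma sqabsE z : (sqabs z)%:C = z * z^*.
Proof.
case: z => a b; rewrite /sqabs /Normc.normc sqr_sqrtr ?addr_ge0 ?sqr_ge0 //.
by rewrite (add_Re2_Im2 (a +i* b)) normCK.
Qed.

Lemma sqabs_ge0 z : 0 <= sqabs z.
Proof. exact: sqr_ge0. Qed.

Lemma sqabs_eq0 z : sqabs z = 0 -> z = 0.
Proof.
move=> z0; apply/eqP; have := sqabsE z; rewrite z0 => /esym/eqP.
by rewrite mulf_eq0 conjc_eq0 orbb.
Qed.

Lemma sqabs_conj z : sqabs z^* = sqabs z.
Proof. by apply: complexI; rewrite !sqabsE conjCK mulrC. Qed.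

Lemma sqabs_real (t : R) : sqabs t%:C = t ^+ 2.
Proof.
apply: complexI; rewrite sqabsE conj_Creal ?(complex_real t 0) //.
by rewrite rmorphXn expr2.
Qed.

End SquaredModulus.

Section KreinSpace.
Variables (R : realType) (V : lmodType R[i]) (kf : V -> V -> R[i]) (J : V -> V).
Hypothesis krein : is_krein_space kf J.

Local Notation ipJ := (Jip kf J).
Local Notation nJ := (normJ kf J).

Lemma kfDl x y z : kf (x + y) z = kf x z + kf y z.
Proof. by case: krein => lin _; have := lin 1 x y z; rewrite scale1r mul1r. Qed.

Lemma kf0l z : kf 0 z = 0.
Proof. by apply: (addrI (kf 0 z)); rewrite -kfDl !addr0. Qed.

Lemma kfZl a x z : kf (a *: x) z = a * kf x z.
Proof. by case: krein => lin _; rewrite -[a *: x]addr0 lin kf0l addr0. Qed.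

Lemma kfNl x z : kf (- x) z = - kf x z.
Proof. by rewrite -scaleN1r kfZl mulN1r. Qed.

Lemma kfC x y : kf y x = (kf x y)^*.
Proof. by case: krein => _ []. Qed.

Lemma JipC x y : ipJ y x = (ipJ x y)^*.
Proof. by case: krein => _ [_ [_ [_ [Jsym _]]]]; rewrite /Jip kfC -Jsym. Qed.

Lemma JipBl x y z : ipJ (x - y) z = ipJ x z - ipJ y z.
Proof. by rewrite /Jip kfDl kfNl. Qed.

Lemma JipBr x y z : ipJ z (x - y) = ipJ z x - ipJ z y.
Proof. by rewrite JipC JipBl rmorphB /= -!JipC. Qed.

Lemma Jip_suml (I : Type) (s : seq I) (c : I -> R[i]) (e : I -> V) z :
  ipJ (\sum_(n <- s) c n *: e n) z = \sum_(n <- s) c n * ipJ (e n) z.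
Proof.
elim: s => [|a s IHs]; first by rewrite !big_nil /Jip kf0l.
by rewrite !big_cons /Jip kfDl kfZl -IHs.
Qed.

Lemma Jip_sumr (I : Type) (s : seq I) (c : I -> R[i]) (e : I -> V) z :
  ipJ z (\sum_(n <- s) c n *: e n) = \sum_(n <- s) (c n)^* * ipJ z (e n).
Proof.
rewrite JipC Jip_suml rmorph_sum; apply: eq_bigr => n _.
by rewrite rmorphM /= -JipC.
Qed.

Lemma Jip_ge0 x : 0 <= ipJ x x.
Proof.
case: krein => _ [_ [_ [_ [_ [Jpos _]]]]].
by have [->|/Jpos/ltW//] := eqVneq x 0; rewrite /Jip kf0l.
Qed.

Lemma normJ_sqr x : (nJ x ^+ 2)%:C = ipJ x x.
Proof.
have := Jip_ge0 x; rewrite lecE /= => /andP[/eqP Im0 Re_ge0].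
by rewrite /normJ sqr_sqrtr // [RHS]complexE Im0 mulr0 addr0.
Qed.

Lemma normJ_ge0 x : 0 <= nJ x.
Proof. exact: sqrtr_ge0. Qed.

Lemma Jip_J x : ipJ (J x) (J x) = ipJ x x.
Proof.
case: krein => _ [_ [_ [JJ _]]].
by rewrite /Jip JJ kfC; apply: conj_Creal; rewrite ger0_real // Jip_ge0.
Qed.

Lemma normJ_J x : nJ (J x) = nJ x.
Proof. by rewrite /normJ Jip_J. Qed.

Lemma normJ_sub_proj_sqr (I : eqType) (e : I -> V) (s : seq I) x :
    uniq s -> {in s &, forall n m, ipJ (e n) (e m) = (m == n)%:R} ->
  nJ (x - \sum_(n <- s) ipJ x (e n) *: e n) ^+ 2
  = nJ x ^+ 2 - \sum_(n <- s) sqabs (ipJ x (e n)).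
Proof.
move=> s_uniq e_orthonormal; set w := \sum_(n <- s) _ *: _.
set sigma := \sum_(n <- s) ipJ x (e n) * (ipJ x (e n))^*.
have Jip_w_x : ipJ w x = sigma.
  by rewrite Jip_suml; apply: eq_bigr => n _; rewrite [ipJ (e n) x]JipC.
have Jip_x_w : ipJ x w = sigma.
  by rewrite Jip_sumr; apply: eq_bigr => n _; rewrite mulrC.
have Jip_w_w : ipJ w w = sigma.
  rewrite Jip_suml big_seq [sigma]big_seq; apply: eq_bigr => n n_s.
  rewrite Jip_sumr (bigD1_seq n) //= e_orthonormal // eqxx mulr1.
  rewrite big_seq_cond big1 ?addr0 // => m /andP[m_s m_n].
  by rewrite e_orthonormal // (negbTE m_n) mulr0.
apply: complexI; rewrite rmorphB rmorph_sum /= !normJ_sqr JipBl !JipBr.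
rewrite Jip_w_x Jip_x_w Jip_w_w subrr subr0.
by congr (_ - _); apply: eq_bigr => n _; rewrite sqabsE.
Qed.

Section ParsevalFrame.
Variables (I : countType) (k : I -> V).
Hypothesis frame : parseval_frame kf J k.

Lemma frame_sum_le x (s : seq I) :
  uniq s -> \sum_(n <- s) sqabs (kf (k n) x) <= nJ x ^+ 2.
Proof. exact: sum_le_esum_EFin (frame x) s. Qed.

Lemma frame_two_terms_le x n m : n != m ->
  sqabs (kf (k n) x) + sqabs (kf (k m) x) <= nJ x ^+ 2.
Proof.
move=> n_m; have := @frame_sum_le x [:: n; m].
by rewrite !big_cons big_nil addr0 /= inE n_m; apply.
Qed.

Hypothesis frame_unit : forall n, sqabs (kf (k n) (k n)) = 1.

Lemma frame_normJ m : nJ (k m) ^+ 2 = 1.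
Proof.
have := @frame_sum_le (k m) [:: m] isT; rewrite big_seq1 frame_unit.
have := @frame_sum_le (J (k m)) [:: m] isT; rewrite big_seq1 normJ_J.
rewrite -[kf (k m) _]/(ipJ (k m) (k m)) -normJ_sqr sqabs_real.
set t := nJ (k m) ^+ 2 => t2_le_t one_le_t.
nra.
Qed.

Lemma frame_Jip_diag m : ipJ (k m) (k m) = 1.
Proof. by rewrite -normJ_sqr frame_normJ. Qed.

Lemma frame_kf_offdiag n m : n != m -> kf (k n) (k m) = 0.
Proof.
move=> n_m; apply: sqabs_eq0; have := frame_two_terms_le (k m) n_m.
by rewrite frame_unit frame_normJ; have := sqabs_ge0 (kf (k n) (k m)); lra.
Qed.

Lemma frame_Jip_offdiag n m : n != m -> ipJ (k n) (k m) = 0.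
Proof.
move=> n_m; apply: sqabs_eq0; have := frame_two_terms_le (J (k m)) n_m.
rewrite normJ_J frame_normJ -[kf (k m) _]/(ipJ (k m) (k m)) frame_Jip_diag.
by rewrite (sqabs_real 1) expr1n; have := sqabs_ge0 (ipJ (k n) (k m)); lra.
Qed.

Lemma frame_Jorthonormal n m : ipJ (k n) (k m) = (m == n)%:R.
Proof.
have [->|m_n] := eqVneq m n; first exact: frame_Jip_diag.
by rewrite frame_Jip_offdiag // eq_sym.
Qed.

Lemma frame_complete : complete_family kf J k.
Proof.
move=> x eps eps_gt0.
have [s s_uniq] := esum_EFin_approx (frame (J x)) (mulr_gt0 eps_gt0 eps_gt0).
have -> : \sum_(n <- s) sqabs (kf (k n) (J x)) = \sum_(n <- s) sqabs (ipJ x (k n)).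
  by apply: eq_bigr => n _; rewrite -[kf _ (J x)]/(ipJ (k n) x) JipC sqabs_conj.
rewrite normJ_J => lt_sum; exists s, (fun n => ipJ x (k n)).
have := normJ_sub_proj_sqr x s_uniq (in2W frame_Jorthonormal).
have := normJ_ge0 (x - \sum_(n <- s) ipJ x (k n) *: k n).
set d := nJ _ => d_ge0 d_sqr.
nra.
Qed.

End ParsevalFrame.

End KreinSpace.

Theorem proposition3p9 (R : realType) (V : lmodType R[i])
    (kf : V -> V -> R[i]) (J : V -> V) (I : countType) (k : I -> V) :
  is_krein_space kf J ->
  parseval_frame kf J k ->
  (forall n : I, sqabs (kf (k n) (k n)) = 1) ->
  J_orthonormal_basis kf J k.
Proof.
move=> krein frame frame_unit.
split; first exact: (frame_complete krein frame frame_unit).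
by split=> // n m /eqP; exact: (frame_kf_offdiag krein frame frame_unit).
Qed.
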